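(* For all positive integers $n$ and all integers $m,k\ge 0$: $\Omega(n,k;m)\ge\Omega(n,k+1;m)$, $\Omega^*(n,k;m)\ge\Omega^*(n,k+1;m)$, and $\Omega^+(n,k;m)\ge\Omega^+(n,k+1;m)$.
   Context: Integers are written with $\bar i=-i$, totally ordered by $0<_{\mathbb Z}\bar1<_{\mathbb Z}1<_{\mathbb Z}\bar2<_{\mathbb Z}2<_{\mathbb Z}\cdots$, and $|\bar j|=j$. Write $a\prec_+ b$ if $a<_{\mathbb Z}b$ or $a=b\in\{0,1,2,\ldots\}$, and $a\prec_- b$ if $a<_{\mathbb Z}b$ or $a=b\in\{\bar1,\bar2,\ldots\}$. A permutation $\pi\in S_n$ is identified with the chain $\pi(1)<_\pi\cdots<_\pi\pi(n)$; a $\pi$-partition is a map $f:[n]\to\mathbb Z$ such that for each $1\le i<n$, $f(\pi(i))\prec_+ f(\pi(i+1))$ if $\pi(i)<\pi(i+1)$ and $f(\pi(i))\prec_- f(\pi(i+1))$ if $\pi(i)>\pi(i+1)$. $\Omega_\pi(m)$ counts $\pi$-partitions with $|f(i)|\le m$ for all $i$; $\Omega^*_\pi(m)$ counts those that additionally never take value $0$; $\Omega^+_\pi(m)$ counts those with all values in $\{1,\ldots,m\}$. Statistics: $\mathrm{des}(\pi)=|\{i: \pi(i)>\pi(i+1)\}|$; $\mathrm{pk}(\pi)=|\{2\le i\le n-1:\pi(i-1)<\pi(i)>\pi(i+1)\}|$; $\mathrm{lpk}(\pi)$ is the number of peaks of $\pi$ with the convention $\pi(0)=0$ (i.e. also counting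 $i=1$ if $\pi(1)>\pi(2)$). It is known that $\Omega_\pi(m)$ depends only on $n$ and $\mathrm{lpk}(\pi)$, $\Omega^*_\pi(m)$ only on $n$ and $\mathrm{pk}(\pi)$, and $\Omega^+_\pi(m)$ only on $n$ and $\mathrm{des}(\pi)$. Define $\Omega(n,k;m)=\Omega_\pi(m)$ for any $\pi\in S_n$ with $\mathrm{lpk}(\pi)=k$, $\Omega^*(n,k;m)=\Omega^*_\pi(m)$ for any $\pi$ with $\mathrm{pk}(\pi)=k$, $\Omega^+(n,k;m)=\Omega^+_\pi(m)$ for any $\pi$ with $\mathrm{des}(\pi)=k$, each defined to be $0$ if no such permutation exists. *)

From mathcomp Require Import all_boot all_order all_algebra all_fingroup.
Set Implicit Arguments. Unset Strict Implicit. Unset Printing Implicit Defensive.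
Import Order.TTheory GRing.Theory Num.Theory.

(* Permutations of [n] are modelled as elements of 'S_n, acting on
   {0,...,n-1}; the chain is pi(0) <_pi ... <_pi pi(n-1) (0-indexed).
   Shifting the letters by one does not change any comparison. *)

(* Position of an integer in the total order 0 < -1 < 1 < -2 < 2 < ... *)
Definition zkey (z : int) : nat :=
  if (0 <= z)%R then (2 * `|z|)%N else (2 * `|z|).-1.

Definition zlt (a b : int) : bool := (zkey a < zkey b)%N.
Definition zprec_plus (a b : int) : bool := zlt a b || ((a == b) && (0 <= a)%R).
Definition zprec_minus (a b : int) : bool := zlt a b || ((a == b) && (a < 0)%R).

Definition is_pi_partition (n : nat) (pi : 'S_n) (f : 'I_n -> int) : bool :=
  [forall i : 'I_n, forall j : 'I_n, (j == i.+1 :> nat) ==>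
     (if (pi i < pi j)%N then zprec_plus (f (pi i)) (f (pi j))
      else zprec_minus (f (pi i)) (f (pi j)))].

(* encoding of {-m,...,m} by 'I_(2m+1) : v |-> v - m *)
Definition dec (m : nat) (v : 'I_(2 * m + 1)) : int := (v%:Z - m%:Z)%R.

Definition OmegaPi (n : nat) (pi : 'S_n) (m : nat) : nat :=
  #|[set g : {ffun 'I_n -> 'I_(2 * m + 1)} |
      is_pi_partition pi (fun i => dec (g i))]|.

Definition OmegaStarPi (n : nat) (pi : 'S_n) (m : nat) : nat :=
  #|[set g : {ffun 'I_n -> 'I_(2 * m + 1)} |
      is_pi_partition pi (fun i => dec (g i)) &&
      [forall i, dec (g i) != 0%R]]|.

Definition OmegaPlusPi (n : nat) (pi : 'S_n) (m : nat) : nat :=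
  #|[set g : {ffun 'I_n -> 'I_(2 * m + 1)} |
      is_pi_partition pi (fun i => dec (g i)) &&
      [forall i, (0 < dec (g i))%R]]|.

Definition des (n : nat) (pi : 'S_n) : nat :=
  #|[set i : 'I_n | [exists j : 'I_n, (j == i.+1 :> nat) && (pi j < pi i)%N]]|.

Definition pk (n : nat) (pi : 'S_n) : nat :=
  #|[set i : 'I_n |
      [exists h : 'I_n, (h.+1 == i :> nat) && (pi h < pi i)%N] &&
      [exists j : 'I_n, (j == i.+1 :> nat) && (pi j < pi i)%N]]|.

(* peaks with the convention pi(0) = 0 (below every letter): the first
   position also counts when pi(first) > pi(second) *)
Definition lpk (n : nat) (pi : 'S_n) : nat :=
  #|[set i : 'I_n |
      ((i == 0%N :> nat) ||
       [exists h : 'I_n, (h.+1 == i :> nat) && (pi h < pi i)%N]) &&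
      [exists j : 'I_n, (j == i.+1 :> nat) && (pi j < pi i)%N]]|.

(* Omega(n,k;m) etc: value for any pi with the statistic equal to k, 0 if none *)
Definition Omega (n k m : nat) : nat :=
  if [pick pi : 'S_n | lpk pi == k] is Some pi then OmegaPi pi m else 0.
Definition OmegaStar (n k m : nat) : nat :=
  if [pick pi : 'S_n | pk pi == k] is Some pi then OmegaStarPi pi m else 0.
Definition OmegaPlus (n k m : nat) : nat :=
  if [pick pi : 'S_n | des pi == k] is Some pi then OmegaPlusPi pi m else 0.

From mathcomp Require Import all_boot all_order all_algebra all_fingroup.
From mathcomp Require Import zify.
Set Implicit Arguments. Unset Strict Implicit. Unset Printing Implicit Defensive.
Import Order.TTheory GRing.Theory Num.Theory.

(* Number the integers by their position [zkey] in 0 < -1 < 1 < -2 < 2 < ...; negative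
   integers get odd keys, so that ≺+ and ≺- become [keyrel true] and [keyrel false] on keys,
   and [<=] and [<] ([posrel]) on positive values.  Reading a permutation as its word of
   ascents ([true]) and descents ([false]), the number of π-partitions with bounded values
   is a product of transfer operators T_x along that word, between two sentinel letters.
   The [keyrel] operators satisfy T_x T_x T_~x = T_x T_~x T_~x, so the product depends only
   on the length and the number of runs of the word, i.e. on its number of peaks, and
   T_+ T_- T_+ <= T_+ T_+ T_+ shows that two more runs can only decrease it.  The [posrel]
   operators commute and T_< <= T_<=, so there only the number of descents matters.  Every
   word is the up-down word of a permutation, so smaller values of each statistic occur. *)

Section Transfer.
Variables (R : bool -> nat -> nat -> bool) (N : nat).

Definition transfer x (v : nat -> nat) a := \sum_(b < N) R x a b * v b.

Fixpoint transfers (w : seq bool) (v : nat -> nat) : nat -> nat :=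
  if w is x :: w' then transfer x (transfers w' v) else v.

Lemma transfers_cat w1 w2 v : transfers (w1 ++ w2) v = transfers w1 (transfers w2 v).
Proof. by elim: w1 => //= x w1 ->. Qed.

Lemma transfer_le x v v' a : (forall b, v b <= v' b) -> transfer x v a <= transfer x v' a.
Proof. by move=> le_v; apply: leq_sum => b _; apply: leq_mul. Qed.

Lemma eq_transfer x v v' a : v =1 v' -> transfer x v a = transfer x v' a.
Proof. by move=> eq_v; apply: eq_bigr => b _; rewrite eq_v. Qed.

Lemma transfers_le w v v' a : (forall b, v b <= v' b) -> transfers w v a <= transfers w v' a.
Proof. by elim: w a => //= x w IH a le_v; apply: transfer_le => b; apply: IH. Qed.

Lemma sum_transferE (F : nat -> nat) y v :
  \sum_(b < N) F b * transfer y v b = \sum_(d < N) v d * \sum_(b < N) F b * R y b d.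
Proof.
under eq_bigr do rewrite /transfer big_distrr.
rewrite exchange_big; apply: eq_bigr => d _; rewrite big_distrr.
by apply: eq_bigr => b _; rewrite /= mulnA mulnC.
Qed.

End Transfer.

Lemma sum_ord_shift N (h g : nat -> nat) : h 0 = 0 -> (forall b, h b.+1 = g b) ->
  g N.-1 = 0 -> \sum_(b < N) h b = \sum_(b < N) g b.
Proof.
case: N => [|N] h0 hg gN; first by rewrite !big_ord0.
rewrite big_ord_recl h0 add0n big_ord_recr /= gN addn0.
by apply: eq_bigr => i _; rewrite hg.
Qed.

Lemma sum_ord_shift_le N (h g : nat -> nat) : h 0 = 0 -> (forall b, h b.+1 <= g b) ->
  \sum_(b < N) h b <= \sum_(b < N) g b.
Proof.
case: N => [|N] h0 hg; first by rewrite !big_ord0.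
rewrite big_ord_recl h0 add0n big_ord_recr /=.
by apply: leq_trans (leq_addr _ _); apply: leq_sum => i _.
Qed.

Lemma sum_ord_eq1 N (f : nat -> nat) b : b < N -> \sum_(c < N) (c == b :> nat) * f c = f b.
Proof.
move=> ltbN; rewrite (bigD1 (Ordinal ltbN)) //= eqxx mul1n big1 ?addn0 // => c.
by rewrite -val_eqE /= => /negbTE ->.
Qed.

Definition keyrel (x : bool) (a b : nat) : bool := (a < b) || ((a == b) && (odd a != x)).

Definition posrel (x : bool) (a b : nat) : bool := if x then a <= b else a < b.

Section KeyrelTransfer.
Variable N : nat.
Local Notation T := (transfer keyrel N).

Lemma transfer_keyrel_flip x u b : b < N ->
  T x u b + (odd b == x) * u b = T (~~ x) u b + (odd b != x) * u b.
Proof.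
move=> ltbN; have split_keyrel y : T y u b =
    \sum_(c < N) (b < c) * u c + \sum_(c < N) (c == b :> nat) * ((odd b != y) * u c).
  rewrite -big_split; apply: eq_bigr => c _ /=; rewrite /keyrel.
  by case: (ltngtP b c) => [||<-]; rewrite ?eqxx /=; lia.
rewrite !split_keyrel !(sum_ord_eq1 (fun c => _ * u c)) //.
by case: x; case: (odd b) => /=; lia.
Qed.

Lemma transfer_keyrel_parity x W a :
  T x (T x W) a + \sum_(b < N) keyrel x a b * (odd b == x) * W b =
  T x (T (~~ x) W) a + \sum_(b < N) keyrel x a b * (odd b != x) * W b.
Proof.
rewrite /transfer -!big_split; apply: eq_bigr => b _ /=.
by rewrite -!mulnA -!mulnDr transfer_keyrel_flip.
Qed.

Lemma sum_keyrel_odd x v a :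
  \sum_(b < N) keyrel x a b * (odd b == x) * T (~~ x) v b =
  \sum_(b < N) keyrel x a b * (odd b != x) * T (~~ x) v b.
Proof.
rewrite (sum_transferE _ _ (fun b => keyrel x a b * (odd b == x))).
rewrite (sum_transferE _ _ (fun b => keyrel x a b * (odd b != x))).
apply: eq_bigr => d _; congr (_ * _).
apply: (@sum_ord_shift N (fun b => keyrel x a b * (odd b == x) * keyrel (~~ x) b d)
                         (fun b => keyrel x a b * (odd b != x) * keyrel (~~ x) b d));
  rewrite /keyrel; have := ltn_ord d; case: x; lia.
Qed.

Lemma sum_keyrel_odd_le v a :
  \sum_(b < N) keyrel true a b * (odd b == true) * T true v b <=
  \sum_(b < N) keyrel true a b * (odd b != true) * T true v b.
Proof.
rewrite (sum_transferE _ _ (fun b => keyrel true a b * (odd b == true))).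
rewrite (sum_transferE _ _ (fun b => keyrel true a b * (odd b != true))).
apply: leq_sum => d _; apply: leq_mul => //.
by apply: (@sum_ord_shift_le N (fun b => keyrel true a b * (odd b == true) * keyrel true b d)
                              (fun b => keyrel true a b * (odd b != true) * keyrel true b d));
  rewrite /keyrel; lia.
Qed.

Lemma transfer_keyrel_braid x v a :
  T x (T x (T (~~ x) v)) a = T x (T (~~ x) (T (~~ x) v)) a.
Proof. by have := transfer_keyrel_parity x (T (~~ x) v) a; rewrite sum_keyrel_odd => /addIn. Qed.

Lemma transfer_keyrel_peak v a :
  T true (T false (T true v)) a <= T true (T true (T true v)) a.
Proof.
by move: (transfer_keyrel_parity true (T true v) a) (sum_keyrel_odd_le v a) => /=; lia.
Qed.

End KeyrelTransfer.

Fixpoint runs (w : seq bool) : nat :=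
  if w is x :: w' then if w' is y :: _ then (x != y) + runs w' else 1 else 0.

Fixpoint peaks (w : seq bool) : nat :=
  if w is x :: w' then if w' is y :: _ then (x && ~~ y) + peaks w' else 0 else 0.

(* The word of length [L] starting with [x] with [t] runs, all singletons but the last. *)
Fixpoint canon_word (x : bool) (t L : nat) : seq bool :=
  if t is (_.+1 as t1).+1 then x :: canon_word (~~ x) t1 L.-1 else nseq L x.

Lemma runs_cons2 x y w : runs [:: x, y & w] = (x != y) + runs (y :: w).
Proof. by []. Qed.

Lemma peaks_cons2 x y w : peaks [:: x, y & w] = (x && ~~ y) + peaks (y :: w).
Proof. by []. Qed.

Lemma runs_le_size w : runs w <= size w.
Proof. by elim: w => //= x [|y w] //= IH; lia. Qed.

Lemma runs_cons_gt0 x w : 0 < runs (x :: w).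
Proof. by elim: w x => //= y w IH x; have := IH y; lia. Qed.

Lemma runs_peaks x w : runs (x :: w) + ~~ last x w = 2 * peaks (x :: w) + 1 + ~~ x.
Proof.
elim: w x => [|y w IH] x /=; first by case: x.
by move: (IH y) => /=; case: w IH => [|z w] IH /=; case: x; case: y => /=; lia.
Qed.

Lemma canon_word_cons x t L :
  canon_word x t.+2 L = x :: canon_word (~~ x) t.+1 L.-1.
Proof. by []. Qed.

Lemma canon_word_head x t L : 0 < L -> exists r, canon_word x t L = x :: r.
Proof. by case: t => [|[|t]] /=; case: L => // L _; eexists. Qed.

Section Canonical.
Variables (R : bool -> nat -> nat -> bool) (N : nat).
Local Notation T := (transfer R N).
Local Notation Ts := (transfers R N).
Hypothesis transfer_braid : forall x v a,
  T x (T x (T (~~ x) v)) a = T x (T (~~ x) (T (~~ x) v)) a.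

Lemma transfer_canon_word t x L v a : 0 < t <= L ->
  T x (Ts (canon_word x t L) v) a = Ts (canon_word x t L.+1) v a.
Proof.
elim: t x L v a => [|[|t] IH] // x [|L] v a /andP [_ leL] //.
have [r def_r] : exists r, canon_word (~~ x) t.+1 L = ~~ x :: r.
  by apply: canon_word_head; lia.
rewrite !canon_word_cons [in LHS]def_r /= transfer_braid; apply: eq_transfer => b.
by rewrite -(IH (~~ x) L v b) ?def_r //; lia.
Qed.

Lemma transfers_canon x w v a :
  Ts (x :: w) v a = Ts (canon_word x (runs (x :: w)) (size w).+1) v a.
Proof.
elim: w x a => [|y w IH] x a //.
rewrite [Ts _ v a]/= (@eq_transfer R N x _ _ a (IH y)) runs_cons2 [size _]/=.
have le_t := runs_le_size (y :: w); rewrite [size _]/= in le_t.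
move: (runs_cons_gt0 y w) le_t; move: (runs (y :: w)) => t.
case: (eqVneq x y) => [<-|/negPf neq_xy] gt0_t le_t.
  by rewrite add0n transfer_canon_word // gt0_t.
have -> : y = ~~ x by case: x y neq_xy => [] [].
by case: t gt0_t le_t.
Qed.

Hypothesis transfer_peak_le : forall v a,
  T true (T false (T true v)) a <= T true (T true (T true v)) a.

(* [x = odd t] says that [canon_word x t L] ends with [true]. *)
Lemma transfers_canon_word_le t x L v a : 0 < t -> x = odd t -> t.+2 <= L ->
  Ts (canon_word x t.+2 L) v a <= Ts (canon_word x t L) v a.
Proof.
elim: t x L v a => [|[|t] IH] // x L v a _ def_x le_L.
  by rewrite def_x; case: L le_L => [|[|[|L]]] //= _; apply: transfer_peak_le.
apply: transfer_le => b; apply: IH => //=; last by lia.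
by rewrite def_x /=; case: (odd t).
Qed.

End Canonical.

Section PosrelTransfer.
Variable N : nat.
Local Notation T := (transfer posrel N).
Local Notation Ts := (transfers posrel N).

Lemma transfer_posrel_comm v a : T true (T false v) a = T false (T true v) a.
Proof.
rewrite /transfer (sum_transferE _ _ (posrel true a)) (sum_transferE _ _ (posrel false a)).
apply: eq_bigr => d _; congr (_ * _); symmetry.
apply: (@sum_ord_shift N (fun b => posrel false a b * posrel true b d)
                         (fun b => posrel true a b * posrel false b d));
  rewrite /posrel; have := ltn_ord d; lia.
Qed.

Lemma transfer_posrel_le u a : T false u a <= T true u a.
Proof. by apply: leq_sum => b _; apply: leq_mul => //; rewrite /posrel; lia. Qed.

Lemma transfers_posrel_sort w v a :
  Ts w v a = Ts (nseq (count id w) true ++ nseq (count negb w) false) v a.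
Proof.
elim: w a => [|[] w IH] a //=; rewrite (@eq_transfer _ _ _ _ _ a IH) //.
rewrite transfers_cat; elim: (count id w) a => [|p IHp] a //=.
by rewrite -transfer_posrel_comm; apply: eq_transfer => b; apply: IHp.
Qed.

Lemma transfers_posrel_le w1 w2 v a : size w1 = size w2 ->
  count negb w1 = (count negb w2).+1 -> Ts w1 v a <= Ts w2 v a.
Proof.
move=> eq_size eq_negb; rewrite (transfers_posrel_sort w1) (transfers_posrel_sort w2).
have -> : count id w2 = count id w1 + 1.
  have count_id_negb w : count id w + count negb w = size w := count_predC id w.
  by move: (count_id_negb w1) (count_id_negb w2); lia.
rewrite eq_negb nseqD -catA.
by rewrite !transfers_cat; apply: transfers_le => b; apply: transfer_posrel_le.
Qed.

End PosrelTransfer.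

Lemma peaks_rcons_true x w : peaks (x :: rcons w true) = peaks (x :: w).
Proof.
elim: w x => [|y w IH] x; first by rewrite /= andbF.
by rewrite rcons_cons; have := IH y; case: w IH => [|z w] IH /=; lia.
Qed.

Lemma transfers_keyrel_peaks_le N x w1 w2 v a : size w1 = size w2 ->
  peaks (x :: w1) = (peaks (x :: w2)).+1 ->
  transfers keyrel N (x :: rcons w1 true) v a <= transfers keyrel N (x :: rcons w2 true) v a.
Proof.
move=> eq_size eq_peaks; rewrite !(transfers_canon (@transfer_keyrel_braid N)).
have := runs_peaks x (rcons w1 true); have := runs_peaks x (rcons w2 true).
rewrite !last_rcons !peaks_rcons_true !size_rcons eq_size eq_peaks => runs2 runs1.
have := runs_le_size (x :: rcons w1 true); rewrite [size _]/= size_rcons eq_size => le_r1.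
have -> : runs (x :: rcons w1 true) = (2 * peaks (x :: w2) + 1 + ~~ x).+2 by lia.
have -> : runs (x :: rcons w2 true) = 2 * peaks (x :: w2) + 1 + ~~ x by lia.
apply: transfers_canon_word_le; [exact: transfer_keyrel_peak | lia | | lia].
by rewrite !oddD /= addbF addbb; case: (x).
Qed.

Lemma peaks_le_true_cons x w : peaks (x :: w) <= peaks (true :: w).
Proof. by case: w => [|y w] //=; case: x => /=; lia. Qed.

Lemma exists_peaks_eq x w k : k <= peaks (x :: w) ->
  exists2 w', size w' = size w & peaks (x :: w') = k.
Proof.
elim: w x k => [|y w IH] x k /=; first by rewrite leqn0 => /eqP ->; exists [::].
case: (leqP k (peaks (y :: w))) => [le_k _ | lt_k le_k].
  have [w0 size_w0 peaks_w0] := IH true k (leq_trans le_k (peaks_le_true_cons y w)).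
  exists (true :: w0); first by rewrite /= size_w0.
  by case: w0 size_w0 peaks_w0 => //= *; rewrite andbF.
exists (y :: w) => //; apply/eqP; rewrite eqn_leq le_k /=.
by move: lt_k le_k; case: (x && ~~ y) => /=; lia.
Qed.

Lemma exists_count_negb_eq w k : k <= count negb w ->
  exists2 w', size w' = size w & count negb w' = k.
Proof.
move=> le_k; exists (nseq k false ++ nseq (size w - k) true).
  by rewrite size_cat !size_nseq; have := count_size negb w; lia.
by rewrite count_cat !count_nseq /=; lia.
Qed.

Lemma mkseq_cons T (f : nat -> T) n : mkseq f n.+1 = f 0 :: mkseq (fun i => f i.+1) n.
Proof. by rewrite /mkseq /= -[1]/(1 + 0) iotaDl -map_comp. Qed.

Section Chains.
Variables (V : finType) (A : pred V) (rel : bool -> V -> V -> bool).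

Definition is_chain n (r : nat -> bool) (h : {ffun 'I_n -> V}) : bool :=
  [forall i : 'I_n, forall j : 'I_n, (j == i.+1 :> nat) ==> rel (r i) (h i) (h j)].

Fixpoint chains (r : nat -> bool) (n : nat) (a : V) : nat :=
  if n is n'.+1 then \sum_(b | A b) rel (r 0) a b * chains (fun i => r i.+1) n' b
  else 1.

Lemma chainsS r n a :
  chains r n.+1 a = \sum_(b | A b) rel (r 0) a b * chains (fun i => r i.+1) n b.
Proof. by []. Qed.

Definition ffcons n (a : V) (g : {ffun 'I_n -> V}) : {ffun 'I_n.+1 -> V} :=
  [ffun i => if unlift ord0 i is Some j then g j else a].

Lemma ffcons0 n a (g : {ffun 'I_n -> V}) : ffcons a g ord0 = a.
Proof. by rewrite ffunE unlift_none. Qed.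

Lemma ffconsS n a (g : {ffun 'I_n -> V}) j : ffcons a g (lift ord0 j) = g j.
Proof. by rewrite ffunE liftK. Qed.

Lemma sum_ffcons n (F : {ffun 'I_n.+1 -> V} -> nat) :
  \sum_f F f = \sum_a \sum_(g : {ffun 'I_n -> V}) F (ffcons a g).
Proof.
rewrite pair_big (reindex (fun p : V * {ffun 'I_n -> V} => ffcons p.1 p.2)) //=.
apply: onW_bij; exists (fun f : {ffun 'I_n.+1 -> V} => (f ord0, [ffun j => f (lift ord0 j)])).
  by case=> a g; rewrite ffcons0; congr (_, _); apply/ffunP => j; rewrite ffunE ffconsS.
by move=> f; apply/ffunP => i; rewrite ffunE; case: unliftP => [j ->|->]; rewrite ?ffunE.
Qed.

Lemma forall_ffcons n a (g : {ffun 'I_n -> V}) :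
  [forall i, A (ffcons a g i)] = A a && [forall i, A (g i)].
Proof.
apply/forallP/andP => [Af | [Aa /forallP Ag] i].
  split; first by have := Af ord0; rewrite ffcons0.
  by apply/forallP => j; have := Af (lift ord0 j); rewrite ffconsS.
by case: (unliftP ord0 i) => [j ->|->]; rewrite ?ffconsS ?ffcons0.
Qed.

Lemma is_chain_ffcons n r a (g : {ffun 'I_n.+1 -> V}) :
  is_chain r (ffcons a g) = rel (r 0) a (g ord0) && is_chain (fun i => r i.+1) g.
Proof.
apply/forallP/andP => [ch | [rel_a /forallP ch] i].
  split.
    by move/forallP/(_ (lift ord0 ord0))/implyP: (ch ord0); rewrite ffcons0 ffconsS; apply.
  apply/forallP => i; apply/forallP => j; apply/implyP => ij.
  move/forallP/(_ (lift ord0 j))/implyP: (ch (lift ord0 i)).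
  by rewrite !ffconsS; apply; rewrite /= /bump /= !add1n.
apply/forallP => j; apply/implyP.
case: (unliftP ord0 i) => [i' ->|->]; case: (unliftP ord0 j) => [j' ->|->] //=.
  rewrite /bump /= !add1n eqSS !ffconsS => ij.
  by move/forallP/(_ j')/implyP: (ch i'); apply.
rewrite /bump /= add1n eqSS => /eqP j'0; rewrite ffcons0 ffconsS.
by have -> : j' = ord0 by apply/val_inj.
Qed.

Lemma is_chain1 r (h : {ffun 'I_1 -> V}) : is_chain r h.
Proof. by apply/forallP => -[[|i] ?]; apply/forallP => -[[|j] ?]. Qed.

Lemma forall_ord0 (g : {ffun 'I_0 -> V}) : [forall i, A (g i)].
Proof. by apply/forallP => -[]. Qed.

Lemma sum_ffcons_head n a (F : {ffun 'I_n.+1 -> V} -> bool) :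
  \sum_(h : {ffun 'I_n.+1 -> V}) ((h ord0 == a) && F h) =
  \sum_(g : {ffun 'I_n -> V}) F (ffcons a g).
Proof.
rewrite sum_ffcons (bigD1 a) //= [X in _ + X]big1 ?addn0 => [|b neq_ba].
  by apply: eq_bigr => g _; rewrite ffcons0 eqxx.
by apply: big1 => g _; rewrite ffcons0 (negbTE neq_ba).
Qed.

Lemma sum_ffun_head n (F : {ffun 'I_n.+1 -> V} -> nat) :
  \sum_(h : {ffun 'I_n.+1 -> V}) F h =
  \sum_b \sum_(h : {ffun 'I_n.+1 -> V}) (h ord0 == b) * F h.
Proof.
rewrite exchange_big; apply: eq_bigr => h _.
by rewrite (bigD1 (h ord0)) //= eqxx mul1n big1 ?addn0 // => b; rewrite eq_sym => /negbTE ->.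
Qed.

Lemma sum_chains_from n r a :
  \sum_(h : {ffun 'I_n.+1 -> V}) ((h ord0 == a) && ([forall i, A (h i)] && is_chain r h))
  = A a * chains r n a.
Proof.
elim: n r a => [|n IH] r a; rewrite sum_ffcons_head.
  under eq_bigr do rewrite forall_ffcons is_chain1 andbT.
  under eq_bigr do rewrite forall_ord0 andbT.
  by rewrite sum_nat_const card_ffun !card_ord mul1n muln1.
under eq_bigr do rewrite forall_ffcons is_chain_ffcons.
rewrite sum_ffun_head /= big_distrr [RHS]big_mkcond /=; apply: eq_bigr => b _.
transitivity (A a * rel (r 0) a b * \sum_(g : {ffun 'I_n.+1 -> V})
  ((g ord0 == b) && ([forall i, A (g i)] && is_chain (fun i => r i.+1) g))).
  rewrite big_distrr; apply: eq_bigr => g _.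
  case: eqP => [->|_] /=; last by rewrite muln0.
  by rewrite mul1n; case: (A a); case: (rel (r 0) a b); rewrite /= ?mul1n ?andbF.
by rewrite (IH (fun i => r i.+1) b); case: (A b); rewrite ?muln0 ?mul1n ?mulnA.
Qed.

Lemma card_chains n r :
  #|[set h : {ffun 'I_n.+1 -> V} | [forall i, A (h i)] && is_chain r h]| =
  \sum_(a | A a) chains r n a.
Proof.
rewrite -sum1_card big_mkcond /= sum_ffun_head [RHS]big_mkcond /=.
apply: eq_bigr => a _; transitivity (A a * chains r n a); last by case: (A a); rewrite ?mul1n.
rewrite -sum_chains_from; apply: eq_bigr => h _; rewrite inE.
by case: eqP; case: (_ && _).
Qed.

End Chains.

Section ChainsTransfers.
Variables (V : finType) (A : pred V) (rel : bool -> V -> V -> bool).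
Variables (key : V -> nat) (R : bool -> nat -> nat -> bool) (lo top : nat) (xe : bool).
Hypothesis rel_key : forall x a b, A a -> A b -> rel x a b = R x (key a) (key b).
Hypothesis key_inj : {in A &, injective key}.
Hypothesis key_range : forall a, A a -> lo <= key a < top.
Hypothesis key_onto : forall c, lo <= c < top -> exists2 a, A a & key a = c.
Hypothesis R_gt : forall x a c, c < a -> R x a c = false.
Hypothesis R_top_top : R xe top top = false.
Hypothesis R_lt_top : forall c, c < top -> R xe c top.

Definition top_vec (c : nat) : nat := c == top.

Lemma transfers_top w : transfers R top.+1 (rcons w xe) top_vec top = 0.
Proof.
elim: w => [|x w IH] /=.
  by apply: big1 => c _; rewrite /top_vec; case: eqP => [->|_]; rewrite ?R_top_top ?muln0.
apply: big1 => c _; have := ltn_ord c; rewrite ltnS leq_eqVlt => /orP [/eqP ->|lt_c].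
  by rewrite IH muln0.
by rewrite R_gt.
Qed.

Lemma sum_keys (f : nat -> nat) : f top = 0 -> (forall c, c < lo -> f c = 0) ->
  \sum_(c < top.+1) f c = \sum_(a | A a) f (key a).
Proof.
move=> f_top f_lo; pose h a : 'I_top.+1 := inord (key a).
have h_key a : A a -> h a = key a :> nat.
  by move=> Aa; rewrite inordK //; have := key_range Aa; lia.
rewrite (bigID (mem (h @: A))) /= [X in _ + X]big1 ?addn0 => [|c /negP not_hA]; last first.
  case: (ltnP c lo) => [/f_lo //|le_c]; move: (ltn_ord c); rewrite ltnS leq_eqVlt.
  case/orP => [/eqP -> //|lt_c]; have [a Aa key_a] := key_onto (c := c) (ltac:(lia)).
  by case: not_hA; apply/imsetP; exists a => //; apply: val_inj; rewrite /= h_key.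
rewrite big_imset => [|a b Aa Ab /(congr1 val)]; last by rewrite /= !h_key //; apply: key_inj.
by apply: eq_bigr => a Aa; rewrite h_key.
Qed.

Lemma chains_transfers n r a : A a ->
  chains A rel r n a = transfers R top.+1 (rcons (mkseq r n) xe) top_vec (key a).
Proof.
elim: n r a => [|n IH] r a Aa.
  rewrite /= /transfer (eq_bigr (fun c : 'I_top.+1 => (c == top :> nat) * R xe (key a) c)).
    by rewrite (sum_ord_eq1 (fun c => R xe (key a) c)) // R_lt_top //; have /andP[] := key_range Aa.
  by move=> c _; rewrite mulnC.
rewrite chainsS mkseq_cons rcons_cons [transfers _ _ _ _]/= /transfer.
set W := transfers _ _ _ _; rewrite (@sum_keys (fun c => R (r 0) (key a) c * W c)).
- by apply: eq_bigr => b Ab; rewrite rel_key // IH.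
- by rewrite /W transfers_top muln0.
- by move=> c lt_c; rewrite R_gt //; have := key_range Aa; lia.
Qed.

Lemma sum_chains_transfers n r x s :
  lo <= top -> (forall c, c < top -> R x s c = (lo <= c)) ->
  \sum_(a | A a) chains A rel r n a = transfers R top.+1 (x :: rcons (mkseq r n) xe) top_vec s.
Proof.
move=> lo_top R_s; rewrite [transfers _ _ _ _]/= /transfer.
set W := transfers _ _ _ _; rewrite (@sum_keys (fun c => R x s c * W c)).
- apply: eq_bigr => a Aa; have /andP[lo_a a_top] := key_range Aa.
  by rewrite chains_transfers // R_s // lo_a mul1n.
- by rewrite /W transfers_top muln0.
- by move=> c lt_c; rewrite R_s ?(leqNgt lo) ?lt_c //; lia.
Qed.

End ChainsTransfers.

Definition zprec (x : bool) (u v : int) : bool :=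
  if x then zprec_plus u v else zprec_minus u v.

Lemma zkey_odd z : odd (zkey z) = (z < 0)%R.
Proof. by rewrite /zkey; case: ifP; lia. Qed.

Lemma zkey_inj : injective zkey.
Proof. by move=> u v; rewrite /zkey; do 2 case: ifP; lia. Qed.

Lemma zkey_eq0 z : (zkey z == 0) = (z == 0%R).
Proof. by rewrite /zkey; case: ifP; lia. Qed.

Lemma zprec_keyrel x u v : zprec x u v = keyrel x (zkey u) (zkey v).
Proof.
rewrite /zprec /zprec_plus /zprec_minus /zlt /keyrel zkey_odd (inj_eq zkey_inj).
by case: x; case: eqP => [->|]; rewrite ?andbF //= ltnn /=; case: ltrP.
Qed.

Lemma zprec_posrel x u v : (0 < u)%R -> (0 < v)%R ->
  zprec x u v = posrel x `|u|%N `|v|%N.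
Proof.
by rewrite /zprec /zprec_plus /zprec_minus /zlt /posrel /zkey; case: x; do 2 case: ifP; lia.
Qed.

Lemma dec_inj m : injective (@dec m).
Proof. by move=> a b; rewrite /dec => eq_ab; apply: val_inj => /=; lia. Qed.

Lemma zkey_dec_le m (a : 'I_(2 * m + 1)) : zkey (dec a) <= 2 * m.
Proof. by rewrite /zkey /dec; have := ltn_ord a; case: ifP; lia. Qed.

Lemma zkey_dec_onto m c : c <= 2 * m -> exists a : 'I_(2 * m + 1), zkey (dec a) = c.
Proof.
move=> le_c; have := odd_double_half c; rewrite -muln2; case: (odd c) => /= def_c.
  have lt_a : m - (c./2).+1 < 2 * m + 1 by lia.
  by exists (Ordinal lt_a); rewrite /zkey /dec /=; case: ifP; lia.
have lt_a : m + c./2 < 2 * m + 1 by lia.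
by exists (Ordinal lt_a); rewrite /zkey /dec /=; case: ifP; lia.
Qed.

Definition asc n (pi : 'S_n.+1) (i : nat) : bool := pi (inord i) < pi (inord i.+1).

Definition updown n (pi : 'S_n.+1) : seq bool := mkseq (asc pi) n.

Lemma is_pi_partition_chain n (pi : 'S_n.+1) (V : finType) (d : V -> int)
    (g : {ffun 'I_n.+1 -> V}) :
  is_pi_partition pi (fun i => d (g i)) =
  is_chain (fun x a b => zprec x (d a) (d b)) (asc pi) [ffun i => g (pi i)].
Proof.
apply: eq_forallb => i; apply: eq_forallb => j.
case: (eqVneq (j : nat) i.+1) => //= j_i; rewrite /asc.
have [-> ->] : inord i = i /\ inord i.+1 = j by split; apply: val_inj; rewrite /= inordK // -j_i.
by rewrite !ffunE /zprec.
Qed.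

Lemma card_pi_partitions n (pi : 'S_n.+1) (V : finType) (d : V -> int) (A : pred V) :
  #|[set g : {ffun 'I_n.+1 -> V} |
      is_pi_partition pi (fun i => d (g i)) && [forall i, A (g i)]]| =
  #|[set h : {ffun 'I_n.+1 -> V} |
      [forall i, A (h i)] && is_chain (fun x a b => zprec x (d a) (d b)) (asc pi) h]|.
Proof.
pose F (g : {ffun 'I_n.+1 -> V}) := [ffun i => g (pi i)].
have F_inj : injective F.
  by move=> g1 g2 /ffunP eq_F; apply/ffunP => j; have := eq_F (pi^-1 j)%g; rewrite !ffunE permKV.
rewrite -[RHS](card_preimset _ F_inj); apply: eq_card => g.
rewrite !inE is_pi_partition_chain andbC.
congr (_ && _); apply/forallP/forallP => A_g i; first by rewrite ffunE.
by have := A_g (pi^-1 i)%g; rewrite ffunE permKV.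
Qed.

Lemma card_ord_count M (P : pred nat) : #|[set i : 'I_M | P i]| = count P (iota 0 M).
Proof.
rewrite -sum1_card (eq_bigl (fun i : 'I_M => P i)) => [|i]; last by rewrite inE.
by rewrite -(big_mkord P (fun _ => 1)) sum1_count /index_iota subn0.
Qed.

Lemma count_iota0S (P : pred nat) n :
  count P (iota 0 n.+1) = P 0 + count (fun i => P i.+1) (iota 0 n).
Proof. by rewrite /= -[1]/(1 + 0) iotaDl count_map. Qed.

Lemma count_iota_lt (f : pred nat) L M : L <= M ->
  count (fun i => (i < L) && f i) (iota 0 M) = count f (iota 0 L).
Proof.
move=> le_LM; rewrite -(subnKC le_LM) iotaD count_cat add0n.
rewrite (@eq_in_count _ _ f) => [|i]; last by rewrite mem_iota => /andP[_ ->].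
rewrite [X in _ + X](@eq_in_count _ _ pred0) ?count_pred0 ?addn0 // => i.
by rewrite mem_iota => /andP[le_i _]; rewrite /= ltnNge le_i.
Qed.

Lemma peaks_cons_mkseq x f n :
  peaks (x :: mkseq f n) = count (fun i => (if i is i'.+1 then f i' else x) && ~~ f i) (iota 0 n).
Proof.
elim: n x f => [|n IH] x f //; rewrite mkseq_cons peaks_cons2 IH count_iota0S.
by congr (_ + _); apply: eq_count => -[].
Qed.

Section UpDown.
Variables (n : nat) (pi : 'S_n.+1).

Lemma exists_descent_at (i : 'I_n.+1) :
  [exists j : 'I_n.+1, (j == i.+1 :> nat) && (pi j < pi i)] = (i < n) && ~~ asc pi i.
Proof.
have inord_i : inord i = i by apply: val_inj; rewrite /= inordK.
rewrite /asc inord_i; apply/existsP/andP => [[j /andP[/eqP j_i lt_pi]] | [lt_i not_asc]].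
  have -> : inord i.+1 = j by apply: val_inj; rewrite /= inordK -j_i ?ltn_ord.
  by split; [move: (ltn_ord j); rewrite j_i | rewrite ltnNge negbK ltnW].
have lt_i1 : i.+1 < n.+1 by [].
exists (inord i.+1); rewrite inordK // eqxx /= ltn_neqAle leqNgt not_asc andbT.
by apply/negP => /eqP/val_inj/perm_inj/(congr1 val); rewrite /= inordK //; lia.
Qed.

Lemma exists_ascent_to (i : 'I_n.+1) :
  [exists h : 'I_n.+1, (h.+1 == i :> nat) && (pi h < pi i)] = (0 < i) && asc pi i.-1.
Proof.
rewrite /asc; apply/existsP/andP => [[h /andP[/eqP h_i lt_pi]] | [gt0_i asc_i]].
  have e1 : inord i.-1 = h by apply: val_inj; rewrite /= -h_i /= inordK.
  have e2 : inord i.-1.+1 = i by apply: val_inj; rewrite /= -h_i /= inordK // h_i.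
  by rewrite e1 e2 -h_i.
have lt_i : i.-1 < n.+1 by rewrite (leq_ltn_trans (leq_pred _) (ltn_ord i)).
have e2 : inord i.-1.+1 = i by apply: val_inj; rewrite /= prednK // inordK.
rewrite e2 in asc_i.
by exists (inord i.-1); rewrite inordK // prednK // eqxx.
Qed.

Lemma des_updown : des pi = count negb (updown pi).
Proof.
rewrite /des (eq_card (B := [set i : 'I_n.+1 | (i < n) && ~~ asc pi i])) => [|i].
  by rewrite (card_ord_count _ (fun i => (i < n) && ~~ asc pi i)) count_iota_lt // count_map.
by rewrite !inE exists_descent_at.
Qed.

Lemma peaks_updown x :
  #|[set i : 'I_n.+1 |
      ((x && (i == 0 :> nat)) || [exists h : 'I_n.+1, (h.+1 == i :> nat) && (pi h < pi i)]) &&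
      [exists j : 'I_n.+1, (j == i.+1 :> nat) && (pi j < pi i)]]| = peaks (x :: updown pi).
Proof.
pose P i := (i < n) && ((if i is i'.+1 then asc pi i' else x) && ~~ asc pi i).
rewrite (eq_card (B := [set i : 'I_n.+1 | P i])) => [|i].
  by rewrite (card_ord_count _ P) count_iota_lt // peaks_cons_mkseq.
rewrite !inE exists_descent_at exists_ascent_to /P; clear P.
by case: (nat_of_ord i) => [|j] /=; case: x; case: (_ < n); rewrite ?andbF.
Qed.

Lemma pk_updown : pk pi = peaks (false :: updown pi).
Proof. exact: (peaks_updown false). Qed.

Lemma lpk_updown : lpk pi = peaks (true :: updown pi).
Proof. exact: (peaks_updown true). Qed.

End UpDown.

Section Realization.
Variables (n : nat) (w : seq bool).
Hypothesis size_w : size w = n.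

Definition walk (i : nat) : int := (\sum_(j < i) (if nth false w j then 1 else -1))%R.

(* The walk of [w], scaled so that each step outweighs the tie-breaking index: the height
   rises from [i] to [i.+1] exactly when [w] has [true] at [i]. *)
Definition height (i : 'I_n.+1) : int := (walk i * n.+1%:Z + (i : nat)%:Z)%R.

Definition rank (i : 'I_n.+1) : nat := #|[set j | (height j < height i)%R]|.

Lemma height_inj : injective height.
Proof.
move=> [i lt_i] [j lt_j]; rewrite /height /= => eq_h; apply: val_inj => /=; move: eq_h.
case: (ltgtP (walk i) (walk j)) => [lt_w|lt_w|->]; last by lia.
  have : ((walk i + 1) * n.+1%:Z <= walk j * n.+1%:Z)%R by rewrite ler_pM2r //; lia.
  by lia.
have : ((walk j + 1) * n.+1%:Z <= walk i * n.+1%:Z)%R by rewrite ler_pM2r //; lia.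
by lia.
Qed.

Lemma rank_lt i : rank i < n.+1.
Proof.
apply: (@leq_ltn_trans #|[set~ i]|); last by rewrite cardsC1 card_ord.
by apply/subset_leq_card/subsetP => j; rewrite !inE; apply: contraTneq => ->; rewrite ltxx.
Qed.

Lemma rank_lt_mono a b : (height a < height b)%R -> rank a < rank b.
Proof.
move=> lt_ab; apply: proper_card; apply/properP; split.
  by apply/subsetP => j; rewrite !inE => /lt_trans; apply.
by exists a; rewrite !inE ?ltxx.
Qed.

Lemma rank_inj : injective rank.
Proof.
move=> a b eq_r; apply: height_inj.
by case: (ltgtP (height a) (height b)) => // /rank_lt_mono; rewrite eq_r ltnn.
Qed.

Definition rank_ord (i : 'I_n.+1) : 'I_n.+1 := Ordinal (rank_lt i).

Lemma rank_ord_inj : injective rank_ord.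
Proof. by move=> a b /(congr1 val) /rank_inj. Qed.

Definition rank_perm : 'S_n.+1 := perm rank_ord_inj.

Lemma height_succ i : i < n ->
  height (inord i.+1) =
  (height (inord i) + (if nth false w i then n.+1%:Z else - n.+1%:Z) + 1)%R.
Proof.
move=> lt_i; rewrite /height !inordK ?ltnS ?(ltnW lt_i) // /walk big_ord_recr /=.
by set S := (\sum_(_ < i) _)%R; case: (nth false w i); nia.
Qed.

Lemma updown_rank_perm : updown rank_perm = w.
Proof.
apply: (@eq_from_nth _ false) => [|i]; rewrite size_mkseq ?size_w // => lt_i.
rewrite nth_mkseq // /asc !permE /=; have := height_succ lt_i.
case: (nth false w i) => h_succ; first by apply: rank_lt_mono; rewrite h_succ; lia.
by apply/negbTE; rewrite -leqNgt ltnW //; apply: rank_lt_mono; rewrite h_succ; lia.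
Qed.

End Realization.

Lemma exists_updown n (w : seq bool) : size w = n -> exists pi : 'S_n.+1, updown pi = w.
Proof. by move=> size_w; exists (rank_perm size_w); apply: updown_rank_perm. Qed.

(* The leading letter [x], read from state [0], forces the first value to have key at least
   [~~ x]; the trailing [true], read into the top state, leaves the last value free. *)
Lemma card_pi_partitions_keyrel n (pi : 'S_n.+1) m x (A : pred 'I_(2 * m + 1)) :
  (forall a, A a = (~~ x <= zkey (dec a))) ->
  #|[set g : {ffun 'I_n.+1 -> 'I_(2 * m + 1)} |
      is_pi_partition pi (fun i => dec (g i)) && [forall i, A (g i)]]| =
  transfers keyrel (2 * m + 1).+1 (x :: rcons (updown pi) true) (top_vec (2 * m + 1)) 0.
Proof.
move=> A_key; rewrite card_pi_partitions card_chains.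
apply: (@sum_chains_transfers _ _ _ (fun a => zkey (dec a)) keyrel (~~ x))
  => [x' a b _ _ | a b _ _ /zkey_inj/dec_inj // | a | c /andP[le_c lt_c] | x' a c | | c | | c].
- by rewrite zprec_keyrel.
- by rewrite A_key => ->; have := zkey_dec_le a; lia.
- by have [|a key_a] := @zkey_dec_onto m c; [lia | exists a; rewrite ?A_key key_a].
all: by rewrite /keyrel; case: x A_key; lia.
Qed.

Lemma OmegaPi_updown n (pi : 'S_n.+1) m :
  OmegaPi pi m =
  transfers keyrel (2 * m + 1).+1 (true :: rcons (updown pi) true) (top_vec (2 * m + 1)) 0.
Proof.
rewrite -(@card_pi_partitions_keyrel _ _ _ _ predT) //; apply: eq_card => g; rewrite !inE.
by have /forallP -> : forall i, predT (g i) by []; rewrite andbT.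
Qed.

Lemma OmegaStarPi_updown n (pi : 'S_n.+1) m :
  OmegaStarPi pi m =
  transfers keyrel (2 * m + 1).+1 (false :: rcons (updown pi) true) (top_vec (2 * m + 1)) 0.
Proof.
by apply: (@card_pi_partitions_keyrel _ _ _ _ (fun a => dec a != 0%R)) => a; rewrite lt0n zkey_eq0.
Qed.

Lemma OmegaPlusPi_updown n (pi : 'S_n.+1) m :
  OmegaPlusPi pi m = transfers posrel m.+2 (false :: rcons (updown pi) false) (top_vec m.+1) 0.
Proof.
rewrite /OmegaPlusPi (card_pi_partitions _ _ (fun a => 0 < dec a)%R).
rewrite (@card_chains _ (fun a => 0 < dec a)%R).
apply: (@sum_chains_transfers _ _ _ (fun a => `|dec a|%N) posrel 1)
  => [x a b | a b | a | c /andP[le_c lt_c] | x a c | | c | | c].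
- exact: zprec_posrel.
- by rewrite /in_mem /= => pos_a pos_b eq_ab; apply: dec_inj; lia.
- by rewrite /dec; have := ltn_ord a; lia.
- have lt_c' : m + c < 2 * m + 1 by lia.
  by exists (Ordinal lt_c'); rewrite /dec /=; lia.
all: by rewrite /posrel; try case: x; lia.
Qed.

Lemma OmegaPi_lpk_le n (p q : 'S_n.+1) m : lpk p = (lpk q).+1 -> OmegaPi p m <= OmegaPi q m.
Proof.
rewrite !lpk_updown !OmegaPi_updown; apply: transfers_keyrel_peaks_le.
by rewrite !size_mkseq.
Qed.

Lemma OmegaStarPi_pk_le n (p q : 'S_n.+1) m :
  pk p = (pk q).+1 -> OmegaStarPi p m <= OmegaStarPi q m.
Proof.
rewrite !pk_updown !OmegaStarPi_updown; apply: transfers_keyrel_peaks_le.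
by rewrite !size_mkseq.
Qed.

Lemma OmegaPlusPi_des_le n (p q : 'S_n.+1) m :
  des p = (des q).+1 -> OmegaPlusPi p m <= OmegaPlusPi q m.
Proof.
rewrite !des_updown !OmegaPlusPi_updown => des_pq; apply: transfers_posrel_le.
  by rewrite /= !size_rcons !size_mkseq.
by rewrite /= -!cats1 !count_cat des_pq.
Qed.

Section DownwardClosed.
Variables (n : nat) (p : 'S_n.+1) (k : nat).

Lemma exists_lpk_eq : k <= lpk p -> exists q : 'S_n.+1, lpk q = k.
Proof.
rewrite lpk_updown => /exists_peaks_eq[w]; rewrite size_mkseq => /exists_updown[q <-].
by exists q; rewrite lpk_updown.
Qed.

Lemma exists_pk_eq : k <= pk p -> exists q : 'S_n.+1, pk q = k.
Proof.
rewrite pk_updown => /exists_peaks_eq[w]; rewrite size_mkseq => /exists_updown[q <-].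
by exists q; rewrite pk_updown.
Qed.

Lemma exists_des_eq : k <= des p -> exists q : 'S_n.+1, des q = k.
Proof.
rewrite des_updown => /exists_count_negb_eq[w]; rewrite size_mkseq => /exists_updown[q <-].
by exists q; rewrite des_updown.
Qed.

End DownwardClosed.

Lemma pick_stat_le (T : finType) (st F : T -> nat) k :
  (forall p, k <= st p -> exists q, st q = k) ->
  (forall p q, st p = (st q).+1 -> F p <= F q) ->
  (if [pick p | st p == k.+1] is Some p then F p else 0) <=
  (if [pick p | st p == k] is Some p then F p else 0).
Proof.
move=> st_down F_le; case: pickP => [p /eqP st_p | _] //.
have [q st_q] : exists q, st q = k by apply: (st_down p); rewrite st_p.
case: pickP => [q' /eqP st_q' | no_q]; first by apply: F_le; rewrite st_p st_q'.
by have := no_q q; rewrite st_q eqxx.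
Qed.

Theorem lemma3p5 (n m k : nat) (hn : (0 < n)%N) :
  [/\ (Omega n k.+1 m <= Omega n k m)%N,
      (OmegaStar n k.+1 m <= OmegaStar n k m)%N &
      (OmegaPlus n k.+1 m <= OmegaPlus n k m)%N].
Proof.
case: n hn => // n _; split; apply: pick_stat_le.
- by move=> p /exists_lpk_eq.
- by move=> p q /OmegaPi_lpk_le.
- by move=> p /exists_pk_eq.
- by move=> p q /OmegaStarPi_pk_le.
- by move=> p /exists_des_eq.
- by move=> p q /OmegaPlusPi_des_le.
Qed.
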